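(* Let $\mathcal{G}$ be a grounded degree sandwich monotone graph class and let $(G,\omega)$ be a weighted graph. Then $(G,\omega)$ is a level-$\mathcal{G}$ weighted graph if and only if $G\in\mathcal{G}$ and every degree-minimal edge elimination scheme of $(G,\omega)$ is a sorted $\mathcal{G}$-safe edge elimination scheme.
   Context: All graphs are finite, simple and undirected. A weighted graph is a pair $(G,\omega)$ with $\omega:E(G)\to\{1,\dots,k\}$ surjective for some $k\ge1$. For $1\le i\le k+1$, the $i$-th level graph of $(G,\omega)$ is obtained from $G$ by removing all edges $e$ with $\omega(e)<i$; $(G,\omega)$ is level-$\mathcal{G}$ if all level graphs are in $\mathcal{G}$. For $G\in\mathcal{G}$, $F\subseteq E(G)$ (resp. edge $e$) is $\mathcal{G}$-safe if $G-F\in\mathcal{G}$ (resp. $G-e\in\mathcal{G}$); $\mathcal{G}$ is grounded if $E(G)$ is $\mathcal{G}$-safe for every $G\in\mathcal{G}$. Given a graph $H$ and $F\subseteq E(H)$, an edge $e\in F$ is degree-minimal in $F$ if its endpoints can be named $u,v$ so that (i) $u$ has the smallest degree in $H$ among all vertices incident to an edge of $F$, and (ii) $v$ has the smallest degree in $H$ among all $w$ with $uw\in F$. $\mathcal{G}$ is degree sandwich monotone if for each $G\in\mathcal{G}$ and each $\mathcal{G}$-safe $F\subseteq E(G)$, every degree-minimal edge in $F$ is $\mathcal{G}$-safe. For an edge ordering $\tau=(e_1,\dots,e_m)$ let $G^i_\tau=G-\{e_1,\dots,e_i\}$, $G^0_\tau=G$. A $\mathcal{G}$-safe edge elimination scheme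 of $G$ is an edge ordering with $G^i_\tau\in\mathcal{G}$ for all $i\in\{1,\dots,m\}$; it is sorted if $i<j$ implies $\omega(e_i)\le\omega(e_j)$. A degree-minimal edge elimination scheme of $(G,\omega)$ is an edge ordering such that for every $i$, $e_i$ is degree-minimal (degrees in $G^{i-1}_\tau$) in the set of minimum-weight edges of $G^{i-1}_\tau$. *)

From mathcomp Require Import all_boot.
Set Implicit Arguments. Unset Strict Implicit. Unset Printing Implicit Defensive.

(* A finite simple graph on the vertex set V (a finType) is given by its edge
   set E : {set {set V}}, every edge being a 2-element subset of V. *)
Definition is_graph (V : finType) (E : {set {set V}}) : Prop :=
  forall e, e \in E -> #|e| = 2.

Definition graph_class := forall V : finType, {set {set V}} -> Prop.

Definition deg (V : finType) (H : {set {set V}}) (v : V) : nat :=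
  #|[set e in H | v \in e]|.

Definition weighting (V : finType) (E : {set {set V}}) (w : {set V} -> nat) (k : nat) : Prop :=
  1 <= k /\ (forall e, e \in E -> 1 <= w e <= k) /\
  (forall i, 1 <= i <= k -> exists2 e, e \in E & w e = i).

Definition level_graph (V : finType) (E : {set {set V}}) (w : {set V} -> nat) (i : nat) :
  {set {set V}} := [set e in E | i <= w e].

Definition level_class (C : graph_class) (V : finType) (E : {set {set V}})
  (w : {set V} -> nat) (k : nat) : Prop :=
  forall i, 1 <= i <= k.+1 -> C V (level_graph E w i).

Definition grounded (C : graph_class) : Prop :=
  forall (V : finType) (E : {set {set V}}), is_graph E -> C V E -> C V (E :\: E).

Definition degree_minimal (V : finType) (H F : {set {set V}}) (e : {set V}) : Prop :=
  e \in F /\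
  exists u v : V, e = [set u; v] /\
    (forall f x, f \in F -> x \in f -> deg H u <= deg H x) /\
    (forall x, [set u; x] \in F -> deg H v <= deg H x).

Definition degree_sandwich_monotone (C : graph_class) : Prop :=
  forall (V : finType) (E : {set {set V}}), is_graph E -> C V E ->
  forall F : {set {set V}}, F \subset E -> C V (E :\: F) ->
  forall e, degree_minimal E F e -> C V (E :\: [set e]).

Definition edge_ordering (V : finType) (E : {set {set V}}) (s : seq {set V}) : Prop :=
  perm_eq s (enum E).

Definition Gi (V : finType) (E : {set {set V}}) (s : seq {set V}) (i : nat) :
  {set {set V}} := E :\: [set e in take i s].

Definition safe_scheme (C : graph_class) (V : finType) (E : {set {set V}})
  (s : seq {set V}) : Prop :=
  edge_ordering E s /\ forall i, 1 <= i <= size s -> C V (Gi E s i).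

Definition sorted_scheme (V : finType) (w : {set V} -> nat) (s : seq {set V}) : Prop :=
  forall i j, i < j < size s -> w (nth set0 s i) <= w (nth set0 s j).

Definition min_weight_edges (V : finType) (H : {set {set V}}) (w : {set V} -> nat) :
  {set {set V}} := [set e in H | [forall f in H, w e <= w f]].

Definition degmin_scheme (V : finType) (E : {set {set V}}) (w : {set V} -> nat)
  (s : seq {set V}) : Prop :=
  edge_ordering E s /\
  forall i, i < size s ->
    let H := Gi E s i in degree_minimal H (min_weight_edges H w) (nth set0 s i).

From mathcomp Require Import all_boot.
Set Implicit Arguments. Unset Strict Implicit. Unset Printing Implicit Defensive.

(* Along a degree-minimal scheme the edges are removed by increasing weight,
   so the scheme is sorted and every level graph is one of the G^i. For safety,
   at step i the minimum-weight edges F of G^i are those of weight w(e_i), so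
   G^i minus F is the level graph w(e_i)+1; as that graph and G^i lie in the
   class, degree sandwich monotonicity puts G^i - e_i = G^(i+1) in the class.
   Conversely, a degree-minimal scheme always exists (pick the edges greedily),
   and it is safe by assumption. *)

Section EliminationSchemes.

Variable V : finType.
Implicit Types (E H F : {set {set V}}) (s : seq {set V}) (w : {set V} -> nat).

Lemma Gi0 E s : Gi E s 0 = E.
Proof. by apply/setP => x; rewrite !inE take0 in_nil. Qed.

Lemma Gi_cons E e s i : Gi E (e :: s) i.+1 = Gi (E :\ e) s i.
Proof.
by apply/setP => x; rewrite /Gi /= !inE; case: (x == e); case: (x \in take i s).
Qed.

Lemma GiS E s i : i < size s -> Gi E s i.+1 = Gi E s i :\ nth set0 s i.
Proof.
move=> ltis; apply/setP => x.
by rewrite !inE (take_nth set0 ltis) mem_rcons in_cons negb_or andbA.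
Qed.

Lemma edge_ordering_uniq E s : edge_ordering E s -> uniq s.
Proof. by move=> ps; rewrite (perm_uniq ps) enum_uniq. Qed.

Lemma edge_ordering_mem E s x : edge_ordering E s -> (x \in s) = (x \in E).
Proof. by move=> ps; rewrite (perm_mem ps) mem_enum. Qed.

Lemma edge_ordering_cons E e s :
  e \in E -> edge_ordering (E :\ e) s -> edge_ordering E (e :: s).
Proof.
move=> eE ps; apply: uniq_perm; rewrite ?enum_uniq //.
  by rewrite /= (edge_ordering_uniq ps) (edge_ordering_mem _ ps) !inE eqxx.
move=> x; rewrite in_cons (edge_ordering_mem _ ps) mem_enum !inE.
by case: eqP => // ->.
Qed.

Lemma mem_Gi E s i x :
  edge_ordering E s -> (x \in Gi E s i) = (x \in E) && (i <= index x s).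
Proof.
move=> ps; rewrite !inE andbC; case xE: (x \in E) => //=.
by rewrite in_take ?(edge_ordering_mem _ ps) // -leqNgt.
Qed.

Lemma safe_scheme_Gi C E s i :
  C V E -> safe_scheme C E s -> i <= size s -> C V (Gi E s i).
Proof.
move=> CE [_ safe]; case: i => [|i] leis; first by rewrite Gi0.
exact: safe.
Qed.

Lemma min_weight_edges_sub H w : min_weight_edges H w \subset H.
Proof. by apply/subsetP => x; rewrite inE => /andP[]. Qed.

Lemma min_weight_edges_min H w e f :
  e \in min_weight_edges H w -> f \in H -> w e <= w f.
Proof. by rewrite inE => /andP [_ /forall_inP]; apply. Qed.

Lemma min_weight_edges_eq0 H w : (min_weight_edges H w == set0) = (H == set0).
Proof.
apply/idP/idP => [|/eqP->]; last by apply/eqP/setP => x; rewrite !inE.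
apply: contraTT => /set0Pn [f fH].
have [m mH mmin] := arg_minnP (P := [in H]) w fH.
by apply/set0Pn; exists m; rewrite inE mH; apply/forall_inP.
Qed.

Lemma setD_min_weight_edges H w e :
  e \in min_weight_edges H w ->
  H :\: min_weight_edges H w = [set x in H | w e < w x].
Proof.
move=> eM; have eH := subsetP (min_weight_edges_sub H w) e eM.
apply/setP => x; rewrite !inE andbC; case: (x \in H) => //=; apply/idP/idP.
  apply: contraR; rewrite -leqNgt => lexe; apply/forall_inP => f fH.
  exact: leq_trans lexe (min_weight_edges_min eM fH).
by move=> ltex; apply/forall_inP => /(_ e eH); rewrite leqNgt ltex.
Qed.

Lemma degree_minimal_exists H F :
  is_graph F -> F != set0 -> exists e, degree_minimal H F e.
Proof.
move=> Fgraph /set0Pn [f0 f0F].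
have [a f0a] : exists a, a \in f0.
  by apply/set0Pn; rewrite -card_gt0 Fgraph.
pose incident t := [exists f in F, t \in f].
have incident_a : incident a by apply/existsP; exists f0; rewrite f0F.
have [u /existsP [f /andP [fF uf]] umin] := arg_minnP (deg H) incident_a.
have /cards1P [z fz] : #|f :\ u| == 1.
  by have := Fgraph f fF; rewrite (cardsD1 u) uf add1n => -[->].
have uzF : [set u; z] \in F by rewrite -fz setD1K.
have [v uvF vmin] := arg_minnP (deg H) (P := fun t => [set u; t] \in F) uzF.
exists [set u; v]; split => //; exists u, v; split => //; split => // g x gF xg.
by apply: umin; apply/existsP; exists g; rewrite gF.
Qed.

Lemma degmin_scheme_exists E w : is_graph E -> exists s, degmin_scheme E w s.
Proof.
move: {2}#|E| (erefl #|E|) => n; elim: n E => [|n IHn] E cardE gE.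
  by exists [::]; split => //; rewrite /edge_ordering (cards0_eq cardE) enum_set0.
have [e de] : exists e, degree_minimal E (min_weight_edges E w) e.
  apply: degree_minimal_exists.
  - by move=> f /(subsetP (min_weight_edges_sub E w)) /gE.
  - by rewrite min_weight_edges_eq0 -card_gt0 cardE.
have eE : e \in E by case: de => /(subsetP (min_weight_edges_sub E w)).
have [s [ps ds]] : exists s, degmin_scheme (E :\ e) w s.
  apply: IHn; first by move: cardE; rewrite (cardsD1 e) eE => -[].
  by move=> f /setD1P [_ /gE].
exists (e :: s); split; first exact: edge_ordering_cons.
case=> [|i] ltis; rewrite /= ?Gi0 ?Gi_cons; [exact: de | exact: ds].
Qed.

Lemma degmin_scheme_sorted E w s : degmin_scheme E w s -> sorted_scheme w s.
Proof.
move=> [ps ds] i j /andP [ltij ltjs].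
have [eM _] := ds i (ltn_trans ltij ltjs); apply: (min_weight_edges_min eM).
rewrite mem_Gi // -(edge_ordering_mem _ ps) (mem_nth _ ltjs).
by rewrite index_uniq ?(edge_ordering_uniq ps) // ltnW.
Qed.

Lemma sorted_Gi_find E w s j :
  edge_ordering E s -> sorted_scheme w s ->
  Gi E s (find (fun e => j <= w e) s) = level_graph E w j.
Proof.
move=> ps srt; apply/setP => x; rewrite mem_Gi // inE.
case xE: (x \in E) => //=.
have xs : x \in s by rewrite (edge_ordering_mem _ ps).
set p := index x s; have ltps : p < size s by rewrite index_mem.
have <- : nth set0 s p = x by rewrite nth_index.
case: ltnP => [ltpf | lefp]; first by have /= -> := before_find set0 ltpf.
have hasj : has (fun e => j <= w e) s by rewrite has_find (leq_ltn_trans lefp).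
apply/esym/(leq_trans (nth_find set0 hasj)).
by move: lefp; rewrite leq_eqVlt => /predU1P [-> // | ltfp]; apply: srt; rewrite ltfp.
Qed.

Lemma sorted_Gi_setD_min_weight E w s i :
  edge_ordering E s -> sorted_scheme w s -> i < size s ->
  nth set0 s i \in min_weight_edges (Gi E s i) w ->
  Gi E s i :\: min_weight_edges (Gi E s i) w =
  level_graph E w (w (nth set0 s i)).+1.
Proof.
move=> ps srt ltis eM; rewrite (setD_min_weight_edges eM); apply/setP => x.
rewrite [in LHS]inE mem_Gi // [in RHS]inE; case xE: (x \in E) => //=.
case: (ltnP (w (nth set0 s i)) (w x)) => [ltex|]; rewrite ?andbT ?andbF //.
rewrite leqNgt; apply/negP => ltxi.
have xs : x \in s by rewrite (edge_ordering_mem _ ps).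
have := srt (index x s) i; rewrite ltxi ltis nth_index // => /(_ isT).
by rewrite leqNgt ltex.
Qed.

End EliminationSchemes.

Lemma level_graph1 V (E : {set {set V}}) w k :
  weighting E w k -> level_graph E w 1 = E.
Proof.
by move=> [_ [wr _]]; apply/setP => x; rewrite inE andb_idr // => /wr /andP[].
Qed.

Lemma degmin_scheme_safe (C : graph_class) V (E : {set {set V}}) w k s :
  degree_sandwich_monotone C -> is_graph E -> weighting E w k ->
  level_class C E w k -> degmin_scheme E w s -> safe_scheme C E s.
Proof.
move=> dsm gE wE lc ds; have srt := degmin_scheme_sorted ds.
have [ps dmin] := ds; split => // i /andP [_].
elim: i => [|i IHi] leis; first by rewrite Gi0 -(level_graph1 wE); apply: lc.
set H := Gi E s i; set e := nth set0 s i.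
have HE : H \subset E by apply/subsetP => x; rewrite inE => /andP[].
have de : degree_minimal H (min_weight_edges H w) e := dmin i leis.
have eE : e \in E by rewrite -(edge_ordering_mem _ ps) mem_nth.
have CH : C V (H :\: min_weight_edges H w).
  rewrite (sorted_Gi_setD_min_weight ps srt leis); last by case: de.
  by apply: lc; case: wE => _ [/(_ e eE) /andP [_ lewk] _]; rewrite ltn0Sn ltnS.
rewrite GiS //; apply: dsm (min_weight_edges_sub H w) CH _ de.
- by move=> f /(subsetP HE) /gE.
- exact: IHi (ltnW leis).
Qed.

Theorem lemma3p1 (C : graph_class) (V : finType) (E : {set {set V}})
  (w : {set V} -> nat) (k : nat) :
  grounded C -> degree_sandwich_monotone C ->
  is_graph E -> weighting E w k ->
  (level_class C E w k <->
   (C V E /\ forall s : seq {set V}, degmin_scheme E w s ->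
      sorted_scheme w s /\ safe_scheme C E s)).
Proof.
move=> _ dsm gE wE; split.
- move=> lc; split; first by rewrite -(level_graph1 wE); apply: lc; case: wE.
  move=> s ds; split; first exact: degmin_scheme_sorted ds.
  exact: degmin_scheme_safe dsm gE wE lc ds.
- move=> [CE hs] j _; have [s ds] := degmin_scheme_exists w gE.
  have [srt ss] := hs s ds.
  rewrite -(sorted_Gi_find j ds.1 srt).
  exact: safe_scheme_Gi (find_size _ _).
Qed.
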